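(* Let $\Omega_1\subseteq\mathbb C$ be path-connected and $\Omega_2\subseteq\mathbb C$ bounded. If $T:\mathbb C_n[z]\to\mathbb C[z]$ is a linear operator mapping every polynomial of degree exactly $n$ in $\pi_n(\Omega_1)$ into $\pi(\Omega_2)$ (in particular never to $0$), then all polynomials $T(f)$, with $f$ of degree exactly $n$ in $\pi_n(\Omega_1)$, have the same degree.
   Context: For $\Omega\subseteq\mathbb C$, $\pi(\Omega)$ is the set of non-zero univariate complex polynomials all of whose zeros lie in $\Omega$ (non-zero constants included), and $\pi_n(\Omega)$ its subset of polynomials of degree at most $n$. *)

From HB Require Import structures.
From mathcomp Require Import all_boot all_order all_algebra.
From mathcomp Require Import all_classical all_reals all_analysis.
From mathcomp Require Import complex.
Set Implicit Arguments. Unset Strict Implicit. Unset Printing Implicit Defensive.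
Import Order.TTheory GRing.Theory Num.Theory.
Import numFieldTopology.Exports numFieldNormedType.Exports.
Local Open Scope classical_set_scope.
Local Open Scope ring_scope.
Local Open Scope complex_scope.

(* Equip C = R[i] with its usual (norm) topology: copy of the metric structure
   that mathcomp-analysis puts on any numFieldType, via the R^o alias.
   (Balls are ball x e = [set y | `|x - y| < e].) *)
HB.instance Definition _ (R : rcfType) := PseudoPointedMetric.copy R[i] (R[i])^o.

Definition pi_set (R : rcfType) (Om : set R[i]) : set {poly R[i]} :=
  [set p | p != 0 /\ forall z, root p z -> Om z].

Definition pi_n_set (R : rcfType) (n : nat) (Om : set R[i]) : set {poly R[i]} :=
  [set p | pi_set Om p /\ (size p <= n.+1)%N].

Definition path_connected_set (R : realType) (Om : set R[i]) : Prop :=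
  forall x y, Om x -> Om y ->
    exists g : R -> R[i],
      {within (`[0, 1]%classic : set R), continuous g} /\ g 0 = x /\ g 1 = y /\
      (forall t, t \in `[0, 1] -> Om (g t)).

Definition bounded_cset (R : realType) (Om : set R[i]) : Prop :=
  exists M : R, forall z, Om z -> `|z| <= M%:C.

Definition linear_on_Cn (R : rcfType) (n : nat) (T : {poly R[i]} -> {poly R[i]}) :=
  forall (a : R[i]) (p q : {poly R[i]}), (size p <= n.+1)%N -> (size q <= n.+1)%N ->
    T (a *: p + q) = a *: T p + T q.

From HB Require Import structures.
From mathcomp Require Import all_boot all_order all_algebra.
From mathcomp Require Import all_classical all_reals all_analysis.
From mathcomp Require Import complex.
Import Order.TTheory GRing.Theory Num.Theory.
Import numFieldTopology.Exports numFieldNormedType.Exports.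
Set Implicit Arguments. Unset Strict Implicit. Unset Printing Implicit Defensive.
Local Open Scope classical_set_scope.
Local Open Scope ring_scope.
Local Open Scope complex_scope.

(* For q of degree n - 1 with roots in Om1, the map w |-> T (q (X - w)) is the
   affine pencil T (q X) - w T q. If its degree dropped below
   D = max (deg T (q X), deg T q) at some w0 in Om1, then T q would have the
   larger degree, and moving w slightly away from w0 along a path in Om1 would
   add to T (q (X - w0)) a small multiple of T q; this creates roots of
   arbitrarily large modulus, contradicting the boundedness of Om2. Hence the
   degree is D on all of Om1, and any two polynomials of degree n in pi_n(Om1)
   are linked by exchanging their roots one at a time. *)

Lemma norm_coef_prod_XsubC_le (F : numDomainType) (M : F) (s : seq F) k :
  0 <= M -> (forall z, z \in s -> `|z| <= M) ->
  `|(\prod_(z <- s) ('X - z%:P))`_k| <= (1 + M) ^+ size s.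
Proof.
move=> M_ge0; elim: s k => [|a s IHs] k s_le.
  by rewrite big_nil coefC expr0; case: (k == 0)%N; rewrite ?normr1 ?normr0.
have a_le : `|a| <= M by apply: s_le; rewrite mem_head.
have {}IHs k' : `|(\prod_(z <- s) ('X - z%:P))`_k'| <= (1 + M) ^+ size s.
  by apply: IHs => z zs; apply: s_le; rewrite in_cons zs orbT.
rewrite big_cons mulrC mulrBr coefB coefMX coefMC /= exprS mulrDl mul1r.
apply: le_trans (ler_normB _ _) _; apply: lerD.
  by case: (k == 0)%N; rewrite ?normr0 ?exprn_ge0 ?addr_ge0.
by rewrite normrM mulrC ler_pM.
Qed.

Lemma norm_coef_le_roots_bound (F : numClosedFieldType) (M : F) (p : {poly F}) k :
  0 <= M -> (forall z, root p z -> `|z| <= M) ->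
  `|p`_k| <= `|lead_coef p| * (1 + M) ^+ (size p).-1.
Proof.
move=> M_ge0 p_roots; have [->|p_neq0] := eqVneq p 0.
  by rewrite coef0 normr0 lead_coef0 normr0 mul0r.
have [s p_eq] := closed_field_poly_normal p.
have lc_neq0 : lead_coef p != 0 by rewrite lead_coef_eq0.
have -> : (size p).-1 = size s by rewrite p_eq size_scale // size_prod_XsubC.
rewrite {1}p_eq coefZ normrM ler_wpM2l // norm_coef_prod_XsubC_le // => z zs.
by apply: p_roots; rewrite p_eq rootZ // root_prod_XsubC.
Qed.

(* The leading coefficient of [Q - e B] is [- e lead_coef B] -> 0, while its
   coefficient of index [deg Q] tends to [lead_coef Q != 0]; this is
   incompatible with [norm_coef_le_roots_bound] for a fixed root bound. *)
Lemma roots_unbounded_small_perturbation (F : numClosedFieldType) (M : F)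
    (Q B : {poly F}) :
  0 <= M -> Q != 0 -> (size Q < size B)%N ->
  exists2 d : F, 0 < d & forall e : F, 0 < `|e| < d ->
    ~ (forall z, root (Q - e *: B) z -> `|z| <= M).
Proof.
move=> M_ge0 Q_neq0 sQB.
set j := (size Q).-1.
set Y := `|lead_coef B| * (1 + M) ^+ (size B).-1 + `|B`_j|.
have Y_ge0 : 0 <= Y by rewrite addr_ge0 ?mulr_ge0 ?exprn_ge0 ?addr_ge0.
have lcQ_gt0 : 0 < `|lead_coef Q| by rewrite normr_gt0 lead_coef_eq0.
exists (`|lead_coef Q| / (Y + 1)); first by rewrite divr_gt0 // ltr_wpDl.
move=> e /andP[e_gt0 e_lt] roots_le.
have e_neq0 : e != 0 by rewrite -normr_gt0.
have sQeB : (size Q < size (- (e *: B)))%N by rewrite size_polyN size_scale.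
have := norm_coef_le_roots_bound j M_ge0 roots_le.
rewrite addrC lead_coefDl // size_polyDl // lead_coefN lead_coefZ size_polyN.
rewrite size_scale // coefD coefN coefZ normrN normrM -mulrA => coef_le.
have lcQ_le : `|lead_coef Q| <= `|e| * Y.
  have -> : lead_coef Q = (- (e * B`_j) + Q`_j) + e * B`_j.
    by rewrite addrC addNKr.
  by apply: le_trans (ler_normD _ _) _; rewrite mulrDr normrM lerD.
move: e_lt; rewrite ltr_pdivlMr ?ltr_wpDl // => /lt_le_trans/(_ lcQ_le).
by rewrite mulrDr mulr1 gtrDl normr_lt0.
Qed.

Lemma continuous_path_small_positive (R : realType) (phi : R -> R) (d : R) :
  {within `[0, 1], continuous phi} -> phi 0 = 0 -> 0 < phi 1 -> 0 < d ->
  exists2 t, t \in `[0, 1] & 0 < phi t < d.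
Proof.
move=> phi_cont phi0 phi1_gt0 d_gt0.
set v := Num.min d (phi 1) / 2.
have min_gt0 : 0 < Num.min d (phi 1) by rewrite lt_min d_gt0 phi1_gt0.
have v_gt0 : 0 < v by rewrite divr_gt0.
have /andP[v_lt_d v_lt_phi1] : (v < d) && (v < phi 1).
  by rewrite -lt_min ltr_pdivrMr // mulr_natr mulr2n ltrDr.
have [t t01 phit] : exists2 t, t \in `[0, 1] & phi t = v.
  apply: IVT; rewrite ?ler01 // phi0.
  by rewrite ge_min le_max (ltW v_gt0) (ltW v_lt_phi1) orbT.
by exists t; rewrite // phit v_gt0.
Qed.

Lemma continuous_Re_dist (R : realType) (w0 : R[i]) :
  continuous (fun z : R[i] => complex.Re (`|z - w0| : R[i])).
Proof.
have ReE (z : R[i]) : (complex.Re (`|z| : R[i]))%:C = `|z|.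
  by rewrite RRe_real // normr_real.
have normC (c : R) : `|c%:C| = `|c|%:C.
  by rewrite normc_def /= expr0n /= addr0 sqrtr_sqr.
move=> x; apply/(@cvgrPdist_lt _ _ _ _ (nbhs_filter x)) => eps eps_gt0.
have /cvgrPdist_lt /(_ eps%:C) := @cvg_id _ (nbhs (x : (R[i])^o)).
rewrite ltcR => /(_ eps_gt0); apply: filterS => z.
rewrite -ltcR -normC rmorphB /= !ReE => xz_lt.
by apply: le_lt_trans (ler_dist_dist _ _) _; rewrite opprB addrA subrK.
Qed.

Lemma path_meets_punctured_disk (R : realType) (g : R -> R[i]) (d : R[i]) :
  {within `[0, 1], continuous g} -> g 1 != g 0 -> 0 < d ->
  exists2 t, t \in `[0, 1] & 0 < `|g t - g 0| < d.
Proof.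
move=> g_cont g10 d_gt0.
set phi := fun t => complex.Re (`|g t - g 0| : R[i]).
have phiE t : (phi t)%:C = `|g t - g 0| by rewrite RRe_real // normr_real.
have dE : (complex.Re d)%:C = d by rewrite RRe_real ?gtr0_real.
have phi_cont : {within `[0, 1], continuous phi}.
  by move=> t; exact: continuous_comp (g_cont t) (@continuous_Re_dist R (g 0) _).
have phi0 : phi 0 = 0 by apply: complexI; rewrite phiE subrr normr0.
have phi1_gt0 : 0 < phi 1 by rewrite -ltcR phiE normr_gt0 subr_eq0.
have Red_gt0 : 0 < complex.Re d by rewrite -ltcR dE.
have [t t01] := continuous_path_small_positive phi_cont phi0 phi1_gt0 Red_gt0.
by rewrite -!ltcR phiE dE => phit; exists t.
Qed.

Lemma size_subZ_lt_size (F : nzRingType) (A B : {poly F}) (w : F) :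
  (size (A - w *: B)%R < maxn (size A) (size B))%N ->
  (size (A - w *: B)%R < size B)%N.
Proof.
have [BA|//] := ltnP (size B) (size A).
rewrite size_polyDl ?ltnn //.
by rewrite size_polyN (leq_ltn_trans (size_scale_leq _ _)).
Qed.

Lemma linear_on_Cn_scale (F : rcfType) n (T : {poly F[i]} -> {poly F[i]})
    (a : F[i]) (p : {poly F[i]}) :
  linear_on_Cn n T -> (size p <= n.+1)%N -> T (a *: p) = a *: T p.
Proof.
move=> T_lin sp.
have T0 : T 0 = 0.
  have := T_lin 1 0 0; rewrite scale1r addr0 size_poly0 => /(_ isT isT).
  by rewrite scale1r => /(congr1 (fun x => x - T 0)); rewrite addrK subrr.
by have := T_lin a p 0; rewrite !addr0 T0 addr0 size_poly0 => ->.
Qed.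

Lemma linear_on_Cn_mul_XsubC (F : rcfType) n (T : {poly F[i]} -> {poly F[i]})
    (q : {poly F[i]}) (w : F[i]) :
  linear_on_Cn n T -> (size q <= n)%N ->
  T (q * ('X - w%:P)) = T (q * 'X) - w *: T q.
Proof.
move=> T_lin sq; have sqX : (size (q * 'X)%R <= n.+1)%N.
  by apply: leq_trans (size_mul_leq _ _) _; rewrite size_polyX addn2.
have -> : q * ('X - w%:P) = (- w) *: q + q * 'X.
  by rewrite mulrBr [q * w%:P]mulrC mul_polyC scaleNr addrC.
by rewrite T_lin ?(leqW sq) // scaleNr addrC.
Qed.

Lemma pi_n_set_mul_XsubC (F : rcfType) n (Om : set F[i])
    (q : {poly F[i]}) (w : F[i]) :
  q != 0 -> size q = n -> (forall z, root q z -> Om z) -> Om w ->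
  size (q * ('X - w%:P)) = n.+1 /\ pi_n_set n Om (q * ('X - w%:P)).
Proof.
move=> q_neq0 sq q_roots Om_w.
have sqw : size (q * ('X - w%:P)) = n.+1.
  by rewrite size_mul ?polyXsubC_eq0 // size_XsubC sq addn2.
split=> //; split; last by rewrite sqw.
split; first by rewrite mulf_neq0 ?polyXsubC_eq0.
by move=> z; rewrite rootM root_XsubC => /orP[/q_roots|/eqP->].
Qed.

Section DegreeInvariance.

Variables (R : realType) (n : nat) (Om1 Om2 : set R[i]).
Variable T : {poly R[i]} -> {poly R[i]}.
Hypothesis Om1_path : path_connected_set Om1.
Hypothesis Om2_bounded : bounded_cset Om2.
Hypothesis T_lin : linear_on_Cn n T.
Hypothesis T_pi : forall f : {poly R[i]},
  size f = n.+1 -> pi_n_set n Om1 f -> pi_set Om2 (T f).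

Section FixedCofactor.

Variable q : {poly R[i]}.
Hypotheses (q_neq0 : q != 0) (size_q : size q = n).
Hypothesis q_roots : forall z, root q z -> Om1 z.

Lemma pi_set_T_mul_XsubC w :
  Om1 w -> pi_set Om2 (T (q * 'X) - w *: T q).
Proof.
move=> Om1_w.
have [sqw piqw] := pi_n_set_mul_XsubC q_neq0 size_q q_roots Om1_w.
by rewrite -(linear_on_Cn_mul_XsubC w T_lin) ?size_q //; apply: T_pi.
Qed.

Lemma size_T_mul_XsubC_max w w' : Om1 w -> Om1 w' -> w' != w ->
  size (T (q * 'X) - w *: T q) = maxn (size (T (q * 'X))) (size (T q)).
Proof.
set A := T (q * 'X); set B := T q => Om1_w Om1_w' w'w.
have [M Om2_le] := Om2_bounded; set Mc := `|M%:C|.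
have roots_le v z : Om1 v -> root (A - v *: B) z -> `|z| <= Mc.
  move=> /pi_set_T_mul_XsubC[_ /(_ z) Om2_roots] /Om2_roots /Om2_le.
  by move/le_trans; apply; rewrite real_ler_norm ?complex_real.
apply/eqP; rewrite eqn_leq; apply/andP; split.
  apply: leq_trans (size_polyD _ _) _; rewrite size_polyN geq_max leq_maxl.
  exact: leq_trans (size_scale_leq _ _) (leq_maxr _ _).
rewrite leqNgt; apply/negP => /size_subZ_lt_size small_size.
have [Q_neq0 _] := pi_set_T_mul_XsubC Om1_w.
have [d d_gt0 escape] :=
  roots_unbounded_small_perturbation (normr_ge0 M%:C) Q_neq0 small_size.
have [g [g_cont [g0 [g1 g_Om1]]]] := Om1_path Om1_w Om1_w'.
have g10 : g 1 != g 0 by rewrite g0 g1.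
have [t t01] := path_meets_punctured_disk g_cont g10 d_gt0.
rewrite g0 => /escape; apply=> z.
have -> : A - w *: B - (g t - w) *: B = A - g t *: B.
  by rewrite scalerBl opprB addrA subrK.
exact: roots_le (g_Om1 t t01).
Qed.

Lemma size_T_mul_XsubC_eq a b : Om1 a -> Om1 b ->
  size (T (q * ('X - a%:P))) = size (T (q * ('X - b%:P))).
Proof.
move=> Om1_a Om1_b; have [->//|ab] := eqVneq a b.
rewrite !(linear_on_Cn_mul_XsubC _ T_lin) ?size_q //.
rewrite (size_T_mul_XsubC_max Om1_a Om1_b) 1?eq_sym //.
by rewrite (size_T_mul_XsubC_max Om1_b Om1_a).
Qed.

End FixedCofactor.

Lemma size_T_prod_XsubC_eq (s t u : seq R[i]) :
  size s = size t -> (size s + size u)%N = n ->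
  {in s, forall z, Om1 z} -> {in t, forall z, Om1 z} -> {in u, forall z, Om1 z} ->
  size (T (\prod_(z <- s ++ u) ('X - z%:P))) =
  size (T (\prod_(z <- t ++ u) ('X - z%:P))).
Proof.
have prod_rot (c : R[i]) v w : \prod_(z <- c :: v ++ w) ('X - z%:P) =
    \prod_(z <- v ++ c :: w) ('X - z%:P).
  by apply: perm_big; rewrite -cat1s perm_catCA.
elim: s t u => [|a s IHs] [|b t] u //= [st] snu s_Om t_Om u_Om.
have a_Om : Om1 a by apply: s_Om; rewrite mem_head.
have b_Om : Om1 b by apply: t_Om; rewrite mem_head.
have IH : size (T (\prod_(z <- s ++ a :: u) ('X - z%:P))) =
          size (T (\prod_(z <- t ++ a :: u) ('X - z%:P))).
  apply: IHs; rewrite ?addnS // => z zsu.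
  - by apply: s_Om; rewrite in_cons zsu orbT.
  - by apply: t_Om; rewrite in_cons zsu orbT.
  - by move: zsu; rewrite in_cons => /predU1P[->|/u_Om].
rewrite prod_rot IH -prod_rot !big_cons ![('X - _%:P) * _]mulrC.
apply: size_T_mul_XsubC_eq => //.
- by rewrite monic_neq0 ?monic_prod_XsubC.
- by rewrite size_prod_XsubC size_cat -st.
- by move=> z; rewrite root_prod_XsubC mem_cat => /orP[zt|zu];
    [apply: t_Om; rewrite in_cons zt orbT | exact: u_Om].
Qed.

End DegreeInvariance.

Lemma linear_on_Cn_size_T_prod_roots (F : rcfType) n (Om : set F[i])
    (T : {poly F[i]} -> {poly F[i]}) (f : {poly F[i]}) :
  linear_on_Cn n T -> size f = n.+1 -> pi_n_set n Om f ->
  exists s : seq F[i], [/\ size s = n, {in s, forall z, Om z} &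
    size (T f) = size (T (\prod_(z <- s) ('X - z%:P)))].
Proof.
move=> T_lin sf [[f_neq0 f_roots] _]; have [s f_eq] := closed_field_poly_normal f.
have lc_neq0 : lead_coef f != 0 by rewrite lead_coef_eq0.
have ss : size s = n.
  by move: sf; rewrite f_eq size_scale // size_prod_XsubC => -[].
exists s; split=> // [z zs|].
  by apply: f_roots; rewrite f_eq rootZ // root_prod_XsubC.
by rewrite {1}f_eq (linear_on_Cn_scale _ T_lin) ?size_scale // size_prod_XsubC ss.
Qed.

Theorem mainTheorem19 (R : realType) (n : nat) (Om1 Om2 : set R[i])
  (T : {poly R[i]} -> {poly R[i]}) :
  path_connected_set Om1 -> bounded_cset Om2 -> linear_on_Cn n T ->
  (forall f : {poly R[i]}, size f = n.+1 -> pi_n_set n Om1 f -> pi_set Om2 (T f)) ->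
  forall f g : {poly R[i]}, size f = n.+1 -> pi_n_set n Om1 f ->
              size g = n.+1 -> pi_n_set n Om1 g ->
              size (T f) = size (T g).
Proof.
move=> Om1_path Om2_bounded T_lin T_pi f g sf pif sg pig.
have [s [ss s_Om ->]] := linear_on_Cn_size_T_prod_roots T_lin sf pif.
have [t [st t_Om ->]] := linear_on_Cn_size_T_prod_roots T_lin sg pig.
have := size_T_prod_XsubC_eq Om1_path Om2_bounded T_lin T_pi
  (s := s) (t := t) (u := [::]).
by rewrite !cats0 addn0; apply; rewrite ?ss ?st.
Qed.
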